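(* Suppose $\hat F_R$ is $\lambda_R$-strongly convex with $\lambda_R\ge\lambda>0$, where $\lambda>0$ is such that $\hat F_S$ is $\lambda$-strongly convex for every dataset $S$. Then $\mathrm{RS}_{\mathrm{ERM}}(R)\le\frac{L}{n\lambda_R}$, $\mathrm{GS}_{\mathrm{ERM}}\le\Delta_{\mathrm{GS}}:=\frac{L}{n\lambda}$, and $$\frac{\mathrm{RS}_{\mathrm{ERM}}(R)}{\Delta_{\mathrm{GS}}}\le\frac{L/(n\lambda_R)}{L/(n\lambda)}=\frac{\lambda}{\lambda_R}.$$
   Context: Let $\mathcal{W}\subseteq\mathbb{R}^d$ and let $f:\mathcal{W}\times\mathcal{Z}\to\mathbb{R}$ be differentiable in $w$ and $L$-Lipschitz in $w$ uniformly over $z$ (so $\|\nabla_w f(w,z)\|_2\le L$). For a dataset $R=\{z_1,\dots,z_n\}$, $\hat F_R(w)=\frac1n\sum_{i=1}^nf(w,z_i)$ and $w_R=\arg\min_{w\in\mathcal{W}}\hat F_R(w)$; minimizers are assumed to be stationary points ($\nabla\hat F_R(w_R)=0$, e.g. $\mathcal{W}=\mathbb{R}^d$). $\hat F_R$ is $\lambda_R$-strongly convex if $\hat F_R(w)-\hat F_R(w')\ge\langle\nabla\hat F_R(w'),w-w'\rangle+\frac{\lambda_R}{2}\|w-w'\|^2$ for all $w,w'\in\mathcal{W}$. The retain sensitivity is $\mathrm{RS}_{\mathrm{ERM}}(R)=\sup_{z\in\mathcal{Z}}\|w_R-w_{R\cup\{z\}}\|$ and the global sensitivity is $\mathrm{GS}_{\mathrm{ERM}}=\sup_R\mathrm{RS}_{\mathrm{ERM}}(R)$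 over datasets $R$ of size $n$. *)

From HB Require Import structures.
From mathcomp Require Import all_boot all_order all_algebra.
From mathcomp Require Import all_classical all_reals all_analysis.
Set Implicit Arguments. Unset Strict Implicit. Unset Printing Implicit Defensive.
Import Order.TTheory GRing.Theory Num.Theory.
Import numFieldNormedType.Exports.
Local Open Scope classical_set_scope.
Local Open Scope ring_scope.

Section Defs.
Variables (R : realType) (d : nat) (Z : Type).

Definition dot (u v : 'rV[R]_d) : R := \sum_(i < d) u ord0 i * v ord0 i.
Definition norm2 (v : 'rV[R]_d) : R := Num.sqrt (\sum_(i < d) v ord0 i ^+ 2).

Definition grad (g : 'rV[R]_d -> R) (w : 'rV[R]_d) : 'rV[R]_d :=
  \row_(i < d) 'D_(delta_mx ord0 i) g w.

(* empirical risk of a dataset S (a multiset, represented as a list) *)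
Definition Fhat (f : 'rV[R]_d -> Z -> R) (S : seq Z) (w : 'rV[R]_d) : R :=
  (size S)%:R^-1 * \sum_(z <- S) f w z.

Definition strongly_convex (W : set 'rV[R]_d) (F : 'rV[R]_d -> R) (lam : R) :=
  forall w w', W w -> W w' ->
    F w - F w' >= dot (grad F w') (w - w') + lam / 2 * norm2 (w - w') ^+ 2.

(* retain sensitivity: w_ S is the (selected) ERM minimizer of dataset S;
   R ∪ {z} is the dataset z :: S (one extra point, n+1 points) *)
Definition RS (w_ : seq Z -> 'rV[R]_d) (S : seq Z) : R :=
  sup [set norm2 (w_ S - w_ (z :: S)) | z in [set: Z]].

Definition GS (w_ : seq Z -> 'rV[R]_d) (n : nat) : R :=
  sup [set RS w_ S | S in [set S : seq Z | size S = n]].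

End Defs.

(** Let w and w' minimize the empirical risks of R and of R ∪ {z}.  Adding the
    two strong-convexity inequalities of F_R at w and w', and using
    grad F_R(w) = 0, gives lam_R |w' - w|^2 <= <grad F_R(w'), w' - w>.
    Since w' is stationary for the risk of R ∪ {z}, n grad F_R(w') equals
    - grad f(w', z), whose norm is at most L; by Cauchy–Schwarz,
    n lam_R |w' - w|^2 <= L |w' - w|. *)
From HB Require Import structures.
From mathcomp Require Import all_boot all_order all_algebra.
From mathcomp Require Import all_classical all_reals all_analysis.
From mathcomp Require Import ring lra.
Set Implicit Arguments. Unset Strict Implicit. Unset Printing Implicit Defensive.
Import Order.TTheory GRing.Theory Num.Theory.
Import numFieldNormedType.Exports.
Local Open Scope classical_set_scope.
Local Open Scope ring_scope.

Section EuclideanSpace.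
Variables (R : realType) (d : nat).
Implicit Types (u v x : 'rV[R]_d) (a : R).

Lemma sum_sqr_ge0 v : 0 <= \sum_(i < d) v ord0 i ^+ 2.
Proof. by apply: sumr_ge0 => i _; exact: sqr_ge0. Qed.

Lemma norm2_ge0 v : 0 <= norm2 v.
Proof. exact: sqrtr_ge0. Qed.

Lemma norm2N v : norm2 (- v) = norm2 v.
Proof. by congr Num.sqrt; apply: eq_bigr => i _; rewrite mxE sqrrN. Qed.

Lemma norm2B u v : norm2 (u - v) = norm2 (v - u).
Proof. by rewrite -norm2N opprB. Qed.

Lemma dotBl u v x : dot (u - v) x = dot u x - dot v x.
Proof. by rewrite /dot -sumrB; apply: eq_bigr => i _; rewrite !mxE mulrBl. Qed.

Lemma dotNl u v : dot (- u) v = - dot u v.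
Proof. by rewrite -sub0r dotBl /dot big1 ?sub0r // => i _; rewrite mxE mul0r. Qed.

Lemma dotZl a u v : dot (a *: u) v = a * dot u v.
Proof. by rewrite /dot mulr_sumr; apply: eq_bigr => i _; rewrite mxE mulrA. Qed.

Lemma dotC u v : dot u v = dot v u.
Proof. by apply: eq_bigr => i _; rewrite mulrC. Qed.

Lemma dot_sqr_le u v :
  dot u v ^+ 2 <= (\sum_(i < d) u ord0 i ^+ 2) * (\sum_(i < d) v ord0 i ^+ 2).
Proof.
set A := \sum_(i < d) u ord0 i ^+ 2; set B := \sum_(i < d) v ord0 i ^+ 2.
set C := dot u v.
have [A0|A_neq0] := eqVneq A 0.
  have u0 i : u ord0 i = 0.
    apply/eqP; rewrite -sqrf_eq0; apply/eqP.
    by apply: (psumr_eq0P (P := predT) (F := fun i => u ord0 i ^+ 2)) => // j _;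
      exact: sqr_ge0.
  have -> : C = 0 by rewrite /C /dot big1 // => i _; rewrite u0 mul0r.
  by rewrite A0 expr0n mul0r.
have A_gt0 : 0 < A by rewrite lt_def A_neq0 sum_sqr_ge0.
(* Expanding the square \sum_i (A v_i - C u_i)^2 >= 0. *)
have expand : \sum_(i < d) (A * v ord0 i - C * u ord0 i) ^+ 2 = A * (A * B - C ^+ 2).
  transitivity (\sum_(i < d) (A ^+ 2 * v ord0 i ^+ 2
      - (2 * A * C) * (u ord0 i * v ord0 i) + C ^+ 2 * u ord0 i ^+ 2)).
    by apply: eq_bigr => i _; ring.
  by rewrite big_split /= sumrB -!mulr_sumr -/A -/B -[\sum_i _ * _]/(dot u v) -/C; ring.
have : 0 <= A * (A * B - C ^+ 2).
  by rewrite -expand; apply: sumr_ge0 => i _; exact: sqr_ge0.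
by rewrite pmulr_rge0 // subr_ge0.
Qed.

Lemma dot_le_norm2 u v : dot u v <= norm2 u * norm2 v.
Proof.
have [uv_le0|uv_gt0] := leP (dot u v) 0.
  by apply: le_trans uv_le0 _; apply: mulr_ge0; exact: norm2_ge0.
rewrite /norm2 -sqrtrM ?sum_sqr_ge0 // -(ger0_norm (ltW uv_gt0)) -sqrtr_sqr.
by rewrite ler_sqrt ?dot_sqr_le // mulr_ge0 ?sum_sqr_ge0.
Qed.

Lemma strongly_convex_grad_dot (W : set 'rV[R]_d) (F : 'rV[R]_d -> R) lam w w' :
  strongly_convex W F lam -> W w -> W w' ->
  lam * norm2 (w' - w) ^+ 2 <= dot (grad F w' - grad F w) (w' - w).
Proof.
move=> scF Ww Ww'.
have := scF w' w Ww' Ww; have := scF w w' Ww Ww'.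
rewrite -[w - w']opprB norm2N [dot _ (- _)]dotC dotNl dotC dotBl.
lra.
Qed.

End EuclideanSpace.

Section EmpiricalRisk.
Variables (R : realType) (d : nat) (Z : Type) (f : 'rV[R]_d -> Z -> R).

Lemma is_derive_sum_loss (S : seq Z) (w v : 'rV[R]_d) :
  (forall z, differentiable (fun w' => f w' z) w) ->
  is_derive w v (fun w' => \sum_(z <- S) f w' z)
    (\sum_(z <- S) 'D_v (fun w' => f w' z) w).
Proof.
move=> fdiff; elim: S => [|z S IH].
  rewrite big_nil (_ : (fun _ => _) = cst 0); first exact: is_derive_cst.
  by apply/funext => w'; rewrite big_nil.
rewrite big_cons (_ : (fun _ => _) = (fun w' => f w' z) + (fun w' => \sum_(y <- S) f w' y)).
  by apply: is_deriveD => //; exact/derivableP/diff_derivable.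
by apply/funext => w'; rewrite big_cons.
Qed.

Lemma grad_Fhat (S : seq Z) (w : 'rV[R]_d) :
  (forall z, differentiable (fun w' => f w' z) w) ->
  grad (Fhat f S) w = (size S)%:R^-1 *: \sum_(z <- S) grad (fun w' => f w' z) w.
Proof.
move=> fdiff; apply/rowP => i; rewrite !mxE summxE.
have sum_derive := is_derive_sum_loss S (delta_mx ord0 i) fdiff.
rewrite (_ : Fhat f S = (size S)%:R^-1 \*: (fun w' => \sum_(z <- S) f w' z)) //.
rewrite deriveZ ?derive_val; last exact: ex_derive.
by congr (_ * _); apply: eq_bigr => z _; rewrite mxE.
Qed.

Lemma grad_Fhat_cons_stationary (S : seq Z) (z : Z) (w : 'rV[R]_d) :
  (forall z, differentiable (fun w' => f w' z) w) -> (0 < size S)%N ->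
  grad (Fhat f (z :: S)) w = 0 ->
  (size S)%:R *: grad (Fhat f S) w = - grad (fun w' => f w' z) w.
Proof.
move=> fdiff S_gt0; rewrite !grad_Fhat // big_cons scalerA mulfV ?pnatr_eq0 -?lt0n //.
move=> /eqP; rewrite scaler_eq0 invr_eq0 pnatr_eq0 /= addrC addr_eq0 scale1r.
by move/eqP.
Qed.

End EmpiricalRisk.

Section Sensitivity.
Variables (R : realType) (d : nat) (Z : Type) (w_ : seq Z -> 'rV[R]_d).

Lemma RS_le (S : seq Z) (c : R) :
  (0 < size S)%N -> (forall z, norm2 (w_ S - w_ (z :: S)) <= c) -> RS w_ S <= c.
Proof.
case: S => // z0 S _ dist_le; apply: ge_sup; last by move=> _ [z _ <-].
by exists (norm2 (w_ (z0 :: S) - w_ [:: z0, z0 & S])), z0.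
Qed.

Lemma GS_le (n : nat) (S0 : seq Z) (c : R) :
  size S0 = n -> (forall S, size S = n -> RS w_ S <= c) -> GS w_ n <= c.
Proof.
move=> S0_n RS_le_c; apply: ge_sup; first by exists (RS w_ S0), S0.
by move=> _ [S S_n <-]; exact: RS_le_c.
Qed.

End Sensitivity.

Section ERMSensitivity.
Variables (R : realType) (d : nat) (Z : Type).
Variables (W : set 'rV[R]_d) (f : 'rV[R]_d -> Z -> R) (L : R).
Hypothesis f_diff : forall z w, W w -> differentiable (fun w' => f w' z) w.
Hypothesis grad_f_le : forall z w, W w -> norm2 (grad (fun w' => f w' z) w) <= L.

Lemma stationary_dist_le (S : seq Z) (z : Z) (lam : R) (w w' : 'rV[R]_d) :
  (0 < size S)%N -> 0 < lam -> strongly_convex W (Fhat f S) lam ->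
  W w -> grad (Fhat f S) w = 0 ->
  W w' -> grad (Fhat f (z :: S)) w' = 0 ->
  norm2 (w - w') <= L / ((size S)%:R * lam).
Proof.
move=> S_gt0 lam_gt0 scF Ww gw0 Ww' gw'0.
set N := norm2 (w' - w).
have N_ge0 : 0 <= N := norm2_ge0 _.
have n_gt0 : 0 < (size S)%:R :> R by rewrite ltr0n.
have curv : lam * N ^+ 2 <= dot (grad (Fhat f S) w') (w' - w).
  by have := strongly_convex_grad_dot scF Ww Ww'; rewrite gw0 subr0.
have slope : (size S)%:R * dot (grad (Fhat f S) w') (w' - w) <= L * N.
  rewrite -dotZl (grad_Fhat_cons_stationary _ S_gt0 gw'0); last by move=> y; exact: f_diff.
  apply: le_trans (dot_le_norm2 _ _) _.
  by rewrite norm2N ler_wpM2r //; exact: grad_f_le.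
rewrite norm2B -/N ler_pdivlMr ?mulr_gt0 //.
have [N0|N_neq0] := eqVneq N 0.
  by rewrite N0 mul0r; apply: le_trans (grad_f_le z Ww'); exact: norm2_ge0.
have N_gt0 : 0 < N by rewrite lt_def N_neq0.
nra.
Qed.

Variable w_ : seq Z -> 'rV[R]_d.
Hypothesis w_erm : forall S : seq Z, (0 < size S)%N ->
  [/\ W (w_ S), (forall w, W w -> Fhat f S (w_ S) <= Fhat f S w)
    & grad (Fhat f S) (w_ S) = 0].

Lemma RS_erm_le (S : seq Z) (lam : R) :
  (0 < size S)%N -> 0 < lam -> strongly_convex W (Fhat f S) lam ->
  RS w_ S <= L / ((size S)%:R * lam).
Proof.
move=> S_gt0 lam_gt0 scF; apply: RS_le => // z.
have [Ww _ gw0] := w_erm S_gt0; have [Ww' _ gw'0] := @w_erm (z :: S) isT.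
exact: stationary_dist_le S_gt0 lam_gt0 scF Ww gw0 Ww' gw'0.
Qed.

End ERMSensitivity.

Theorem mainTheorem11 (R : realType) (d : nat) (Z : Type)
  (W : set 'rV[R]_d) (f : 'rV[R]_d -> Z -> R) (L : R)
  (w_ : seq Z -> 'rV[R]_d) (n : nat) (S0 : seq Z) (lam lamR : R) :
  (forall z w, W w -> differentiable (fun w' => f w' z) w) ->
  (forall z w w', W w -> W w' -> `|f w z - f w' z| <= L * norm2 (w - w')) ->
  (forall z w, W w -> norm2 (grad (fun w' => f w' z) w) <= L) ->
  (forall S : seq Z, (0 < size S)%N ->
     [/\ W (w_ S), (forall w, W w -> Fhat f S (w_ S) <= Fhat f S w)
       & grad (Fhat f S) (w_ S) = 0]) ->
  (0 < n)%N ->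
  size S0 = n ->
  0 < lam ->
  (forall S : seq Z, size S = n -> strongly_convex W (Fhat f S) lam) ->
  strongly_convex W (Fhat f S0) lamR ->
  lam <= lamR ->
  [/\ RS w_ S0 <= L / (n%:R * lamR),
      GS w_ n <= L / (n%:R * lam)
    & RS w_ S0 / (L / (n%:R * lam)) <= lam / lamR].
Proof.
move=> f_diff _ grad_f_le w_erm n_gt0 S0_n lam_gt0 scF scF0 lam_le_lamR.
have lamR_gt0 : 0 < lamR := lt_le_trans lam_gt0 lam_le_lamR.
have RS_S0 : RS w_ S0 <= L / (n%:R * lamR).
  by rewrite -S0_n; apply: (RS_erm_le f_diff grad_f_le w_erm); rewrite ?S0_n.
split => //.
  apply: (GS_le S0_n) => S S_n; rewrite -S_n.
  by apply: (RS_erm_le f_diff grad_f_le w_erm); rewrite ?S_n //; exact: scF.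
have L_ge0 : 0 <= L.
  case: S0 S0_n n_gt0 {scF0 RS_S0} => [<-//|z S _ _].
  have [Wz _ _] := w_erm (z :: S) isT.
  exact: le_trans (norm2_ge0 _) (grad_f_le z _ Wz).
have [L0|L_neq0] := eqVneq L 0.
  by rewrite L0 mul0r invr0 mulr0 divr_ge0 ?ltW.
have L_gt0 : 0 < L by rewrite lt_def L_neq0.
have nR_gt0 : 0 < n%:R :> R by rewrite ltr0n.
rewrite ler_pdivrMr ?divr_gt0 ?mulr_gt0 //.
suff -> : lam / lamR * (L / (n%:R * lam)) = L / (n%:R * lamR) by [].
by field; rewrite !gt_eqF.
Qed.
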